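(* Let $g:\mathbb{R}\to\mathbb{R}$ be a periodic $C^1$ function of period $1$ with finitely many critical points in $[0,1]$. Then there exist a constant $C>0$ and, for every $\epsilon>0$, a number $\delta=\delta(\epsilon)>0$ with $\delta(\epsilon)\to 0$ as $\epsilon\to0$, such that for every $\epsilon>0$ the set $$A=\{(x,y)\in[0,1]^2 : |g(x)-g(y)|<\epsilon\}$$ can be covered by $N\le C/\delta$ squares with horizontal and vertical sides of length $\delta$.
   Context: A critical point of $g$ is a point where $g'$ vanishes. *)

From Stdlib Require Import Reals List.
From Coquelicot Require Import Coquelicot.
Open Scope R_scope.

Definition periodic1 (g : R -> R) : Prop := forall x, g (x + 1) = g x.

Definition is_C1 (g : R -> R) : Prop :=
  (forall x, ex_derive g x) /\ (forall x, continuous (Derive g) x).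

Definition critical_point (g : R -> R) (x : R) : Prop := Derive g x = 0.

Definition finitely_many_critical_points_01 (g : R -> R) : Prop :=
  exists l : list R, forall x, 0 <= x <= 1 -> critical_point g x -> In x l.

Definition in_square (d : R) (c : R * R) (p : R * R) : Prop :=
  fst c <= fst p <= fst c + d /\ snd c <= snd p <= snd c + d.

From Stdlib Require Import Reals List Lra Lia Classical.
From Coquelicot Require Import Coquelicot.
Open Scope R_scope.

(* Cut [0,1] at the critical points into finitely many pieces on which [g] is strictly
   monotone.  On each piece [g] has a uniformly continuous inverse, so [|g y - g y'| < 2 eps]
   with [y, y'] in one piece forces [|y - y'| <= omega (2 eps)] for a modulus [omega] tending
   to [0]; take [delta eps = omega (2 eps) + eps] (capped by [1]).  For two pieces [P, Q] the
   points [(x, y)] of [A] in [P x Q] are then almost monotone: [x <= x'] forces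
   [y <= y' + delta], or [y' <= y + delta] when [g] runs in opposite directions on [P] and [Q].
   Hence [A] meets each diagonal strip of width [delta] in a set of diameter [O(delta)], and
   [O(1/delta)] such strips cover [P x Q]. *)

Lemma sign_Rabs_mult (s t : R) : s = 1 \/ s = -1 -> Rabs (s * t) = Rabs t.
Proof. intros [-> | ->]; split_Rabs; lra. Qed.

Definition strictly_increasing_on (f : R -> R) (a b : R) : Prop :=
  forall u v, a <= u -> u < v -> v <= b -> f u < f v.

Lemma C1_continuity_pt (g : R -> R) (x : R) : is_C1 g -> continuity_pt g x.
Proof.
  intros [Hd _]. apply continuity_pt_filterlim.
  apply (ex_derive_continuous (K := R_AbsRing) (V := R_NormedModule)), Hd.
Qed.

Lemma C1_Derive_continuity (g : R -> R) : is_C1 g -> continuity (Derive g).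
Proof. intros [_ Hc] x. apply continuity_pt_filterlim, Hc. Qed.

Lemma Derive_sign_constant (g : R -> R) (a b : R) :
  is_C1 g -> (forall z, a < z < b -> Derive g z <> 0) ->
  (forall z, a < z < b -> 0 < Derive g z) \/ (forall z, a < z < b -> Derive g z < 0).
Proof.
  intros HC Hne.
  destruct (classic (exists z, a < z < b /\ Derive g z < 0)) as [[z [Hz Hneg]] | Hnoneg].
  - right. intros w Hw. destruct (Rlt_le_dec (Derive g w) 0) as [| Hpos]; [assumption | exfalso].
    destruct (IVT_gen (Derive g) z w 0 (C1_Derive_continuity g HC)) as [c [Hc Hc0]].
    { unfold Rmin, Rmax; destruct Rle_dec; lra. }
    apply (Hne c); [| exact Hc0]. unfold Rmin, Rmax in Hc; destruct Rle_dec; lra.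
  - left. intros w Hw. destruct (Rlt_le_dec 0 (Derive g w)) as [| Hle]; [assumption | exfalso].
    destruct (Rle_lt_or_eq_dec _ _ Hle) as [Hlt | Heq]; [| exact (Hne w Hw Heq)].
    apply Hnoneg. exists w. split; assumption.
Qed.

Lemma Derive_neq0_strictly_monotone (g : R -> R) (a b : R) :
  is_C1 g -> (forall z, a < z < b -> Derive g z <> 0) ->
  exists s, (s = 1 \/ s = -1) /\ strictly_increasing_on (fun x => s * g x) a b.
Proof.
  intros HC Hne.
  assert (Hmvt : forall u v, u < v -> exists c, g v - g u = Derive g c * (v - u) /\ u < c < v).
  { intros u v Huv. apply MVT_cor2; [exact Huv |].
    intros c _. apply is_derive_Reals, Derive_correct, HC. }
  destruct (Derive_sign_constant g a b HC Hne) as [Hpos | Hneg];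
    [exists 1 | exists (-1)]; (split; [lra |]); intros u v Hu Huv Hv;
    destruct (Hmvt u v Huv) as [c [Hc Hcuv]].
  - assert (0 < Derive g c * (v - u)) by (apply Rmult_lt_0_compat; [apply Hpos |]; lra). lra.
  - assert (0 < - Derive g c * (v - u))
      by (apply Rmult_lt_0_compat; [apply Ropp_0_gt_lt_contravar, Hneg |]; lra). lra.
Qed.

Lemma strictly_increasing_inverse_uniform (f : R -> R) (a b : R) :
  (forall x, a <= x <= b -> continuity_pt f x) -> strictly_increasing_on f a b ->
  forall eta, 0 < eta -> exists e, 0 < e /\
    forall y y', a <= y <= b -> a <= y' <= b -> Rabs (f y - f y') < e -> Rabs (y - y') <= eta.
Proof.
  intros Hc Hinc eta Heta.
  destruct (Rle_dec (b - a) eta) as [Hshort | Hlong].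
  { exists 1. split; [lra |]. intros y y' Hy Hy' _. apply Rabs_le; lra. }
  set (h := fun z => f (z + eta) - f z).
  destruct (continuity_ab_min h a (b - eta)) as [zm [Hmin Hzm]]; [lra | |].
  { intros z Hz. apply continuity_pt_minus; [| apply Hc; lra].
    apply (continuity_pt_comp (fun t => t + eta) f); [reg | apply Hc; lra]. }
  exists (h zm). split; [unfold h; pose proof (Hinc zm (zm + eta)); lra |].
  assert (Hgap : forall u v, a <= u -> u + eta < v -> v <= b -> h zm <= f v - f u).
  { intros u v Hu Huv Hv. pose proof (Hmin u ltac:(lra)).
    pose proof (Hinc (u + eta) v ltac:(lra) Huv Hv). unfold h in *. lra. }
  intros y y' Hy Hy' Hsmall. apply Rnot_lt_le. intros Hfar.
  destruct (Rle_dec y y').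
  - pose proof (Hgap y y'). split_Rabs; lra.
  - pose proof (Hgap y' y). split_Rabs; lra.
Qed.

Definition in_piece (p : R * R) (x : R) : Prop := fst p <= x <= snd p.

Lemma critical_free_pieces (g : R -> R) (l : list R) :
  forall a b, (forall x, a < x < b -> critical_point g x -> In x l) ->
  exists pcs : list (R * R),
    (forall p, In p pcs ->
       a <= fst p /\ snd p <= b /\ forall z, fst p < z < snd p -> Derive g z <> 0) /\
    (forall x, a <= x <= b -> exists p, In p pcs /\ in_piece p x).
Proof.
  induction l as [| c l IH]; intros a b Hcrit.
  - exists ((a, b) :: nil). split.
    + intros p [<- | []]. simpl. repeat split; try lra. intros z Hz. exact (Hcrit z Hz).
    + intros x Hx. exists (a, b). split; [left |]; auto.
  - destruct (classic (a < c < b)) as [Hc | Hc].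
    + destruct (IH a c) as [pcs1 [Hok1 Hcov1]].
      { intros x Hx Hx0. destruct (Hcrit x ltac:(lra) Hx0) as [-> |]; [lra | assumption]. }
      destruct (IH c b) as [pcs2 [Hok2 Hcov2]].
      { intros x Hx Hx0. destruct (Hcrit x ltac:(lra) Hx0) as [-> |]; [lra | assumption]. }
      exists (pcs1 ++ pcs2). split.
      * intros p Hp. apply in_app_or in Hp as [Hp | Hp];
          [pose proof (Hok1 p Hp) | pose proof (Hok2 p Hp)]; intuition lra.
      * intros x Hx. destruct (Rle_dec x c).
        -- destruct (Hcov1 x ltac:(lra)) as [p [Hp Hxp]]. exists p. auto using in_or_app.
        -- destruct (Hcov2 x ltac:(lra)) as [p [Hp Hxp]]. exists p. auto using in_or_app.
    + apply IH. intros x Hx Hx0. destruct (Hcrit x Hx Hx0) as [-> |]; [contradiction | assumption].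
Qed.

Definition monotone_piece (g : R -> R) (p : R * R) : Prop :=
  0 <= fst p /\ snd p <= 1 /\
  exists s, (s = 1 \/ s = -1) /\ strictly_increasing_on (fun x => s * g x) (fst p) (snd p).

Lemma monotone_pieces (g : R -> R) :
  is_C1 g -> finitely_many_critical_points_01 g ->
  exists pcs : list (R * R), (forall p, In p pcs -> monotone_piece g p) /\
    (forall x, 0 <= x <= 1 -> exists p, In p pcs /\ in_piece p x).
Proof.
  intros HC [l Hl].
  destruct (critical_free_pieces g l 0 1) as [pcs [Hok Hcov]].
  { intros x Hx. apply Hl. lra. }
  exists pcs. split; [| exact Hcov].
  intros p Hp. destruct (Hok p Hp) as [H0 [H1 Hne]].
  repeat split; auto. apply Derive_neq0_strictly_monotone; assumption.
Qed.

Definition same_piece (pcs : list (R * R)) (y y' : R) : Prop :=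
  exists p, In p pcs /\ in_piece p y /\ in_piece p y'.

Lemma pieces_inverse_uniform (g : R -> R) (pcs : list (R * R)) :
  is_C1 g -> (forall p, In p pcs -> monotone_piece g p) ->
  forall eta, 0 < eta -> exists e, 0 < e /\
    forall y y', same_piece pcs y y' -> Rabs (g y - g y') < e -> Rabs (y - y') <= eta.
Proof.
  intros HC. induction pcs as [| p pcs IH]; intros Hpcs eta Heta.
  - exists 1. split; [lra |]. intros y y' [p [[] _]].
  - destruct (IH (fun q Hq => Hpcs q (or_intror Hq)) eta Heta) as [e1 [He1 H1]].
    destruct (Hpcs p (or_introl eq_refl)) as [_ [_ [s [Hs Hinc]]]].
    destruct (strictly_increasing_inverse_uniform (fun x => s * g x) (fst p) (snd p))
      with (eta := eta) as [e2 [He2 H2]]; [| exact Hinc | exact Heta |].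
    { intros x _. apply continuity_pt_scal, C1_continuity_pt, HC. }
    exists (Rmin e1 e2). split; [apply Rmin_pos; assumption |].
    intros y y' [q [[Hpq | Hq] [Hy Hy']]] Hsmall.
    + subst q. apply H2; [exact Hy | exact Hy' |].
      rewrite <- Rmult_minus_distr_l, sign_Rabs_mult by exact Hs.
      pose proof (Rmin_r e1 e2). lra.
    + apply H1; [exists q; auto |]. pose proof (Rmin_l e1 e2). lra.
Qed.

(* [omega eps] is the supremum of [|y - y'|] over related [y, y'] with [|g y - g y'| < eps];
   the value [0] is thrown in to make the set nonempty. *)
Lemma inverse_modulus (g : R -> R) (rel : R -> R -> Prop) (B : R) :
  (forall y y', rel y y' -> Rabs (y - y') <= B) ->
  (forall eta, 0 < eta -> exists e, 0 < e /\
     forall y y', rel y y' -> Rabs (g y - g y') < e -> Rabs (y - y') <= eta) ->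
  exists omega : R -> R,
    (forall eps, 0 <= omega eps) /\
    (forall eps y y', rel y y' -> Rabs (g y - g y') < eps -> Rabs (y - y') <= omega eps) /\
    (forall eta, 0 < eta -> exists e, 0 < e /\ forall eps, eps < e -> omega eps <= eta).
Proof.
  intros HB Hunif.
  set (E := fun eps t => t = 0 \/
    exists y y', rel y y' /\ Rabs (g y - g y') < eps /\ t = Rabs (y - y')).
  assert (Hbound : forall eps, bound (E eps)).
  { intros eps. exists (Rabs B). intros t [-> | [y [y' [Hr [_ ->]]]]].
    - apply Rabs_pos.
    - apply Rle_trans with B; [exact (HB y y' Hr) | apply RRle_abs]. }
  assert (Hne : forall eps, exists t, E eps t) by (intros eps; exists 0; left; reflexivity).
  exists (fun eps => proj1_sig (completeness (E eps) (Hbound eps) (Hne eps))).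
  split; [| split].
  - intros eps. destruct completeness as [m Hm]. apply Hm. left. reflexivity.
  - intros eps y y' Hr Hsmall. destruct completeness as [m Hm]. apply Hm.
    right. exists y, y'. auto.
  - intros eta Heta. destruct (Hunif eta Heta) as [e [He Hfine]].
    exists e. split; [exact He |]. intros eps Heps.
    destruct completeness as [m Hm]. apply Hm.
    intros t [-> | [y [y' [Hr [Hsmall ->]]]]]; [lra |].
    apply Hfine; [exact Hr | lra].
Qed.

Definition covered_by (d : R) (squares : list (R * R)) (S : R * R -> Prop) : Prop :=
  forall p, S p -> exists c, In c squares /\ in_square d c p.

Definition four_offsets (x0 d : R) : list R := x0 - 2 * d :: x0 - d :: x0 :: x0 + d :: nil.

Lemma four_offsets_cover (x0 d x : R) :
  0 <= d -> Rabs (x - x0) <= 2 * d -> exists a, In a (four_offsets x0 d) /\ a <= x <= a + d.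
Proof.
  intros Hd Hx. apply Rabs_le_between in Hx. unfold four_offsets; simpl.
  destruct (Rle_dec x (x0 - d)); [exists (x0 - 2 * d); split; [tauto | lra] |].
  destruct (Rle_dec x x0); [exists (x0 - d); split; [tauto | lra] |].
  destruct (Rle_dec x (x0 + d)); [exists x0; split; [tauto | lra] |].
  exists (x0 + d). split; [tauto | lra].
Qed.

Lemma box_cover (d : R) (p0 : R * R) :
  0 <= d -> exists squares, length squares = 16%nat /\
    covered_by d squares
      (fun p => Rabs (fst p - fst p0) <= 2 * d /\ Rabs (snd p - snd p0) <= 2 * d).
Proof.
  intros Hd. exists (list_prod (four_offsets (fst p0) d) (four_offsets (snd p0) d)).
  split; [rewrite length_prod; reflexivity |].
  intros p [Hx Hy].
  destruct (four_offsets_cover (fst p0) d (fst p) Hd Hx) as [a [Ha Hxa]].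
  destruct (four_offsets_cover (snd p0) d (snd p) Hd Hy) as [b [Hb Hyb]].
  exists (a, b). split; [apply in_prod; assumption | split; assumption].
Qed.

(* Slice the plane into [K] strips of width [d] in the direction of [tau]; the part of [S] in
   one strip is covered by the 16 squares around any of its points. *)
Lemma strips_cover (S : R * R -> Prop) (tau : R * R -> R) (c d : R) (K : nat) :
  0 <= d ->
  (forall p q, S p -> S q -> Rabs (tau p - tau q) < d ->
     Rabs (fst p - fst q) <= 2 * d /\ Rabs (snd p - snd q) <= 2 * d) ->
  (forall p, S p -> c <= tau p < c + INR K * d) ->
  exists squares, (length squares <= 16 * K)%nat /\ covered_by d squares S.
Proof.
  intros Hd. induction K as [| K IH] in S |- *; intros Hclust Hrange.
  - exists nil. split; [reflexivity |].
    intros p Hp. specialize (Hrange p Hp). simpl in Hrange. lra.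
  - destruct (IH (fun p => S p /\ tau p < c + INR K * d)) as [sq1 [Hlen1 Hcov1]].
    { intros p q [Hp _] [Hq _]. apply Hclust; assumption. }
    { intros p [Hp Hlt]. pose proof (Hrange p Hp). lra. }
    rewrite S_INR in Hrange.
    destruct (classic (exists p0, S p0 /\ c + INR K * d <= tau p0)) as [[p0 [Hp0 Hlast]] | Hnone].
    + destruct (box_cover d p0 Hd) as [sq2 [Hlen2 Hcov2]].
      exists (sq1 ++ sq2). split; [rewrite length_app; lia |].
      intros p Hp. destruct (Rlt_le_dec (tau p) (c + INR K * d)) as [Hlt | Hge].
      * destruct (Hcov1 p (conj Hp Hlt)) as [sq [Hsq Hin]]. exists sq. auto using in_or_app.
      * destruct (Hcov2 p) as [sq [Hsq Hin]]; [| exists sq; auto using in_or_app].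
        apply Hclust; [assumption | assumption |].
        pose proof (Hrange p Hp). pose proof (Hrange p0 Hp0). apply Rabs_def1; lra.
    + exists sq1. split; [lia |]. intros p Hp. apply Hcov1. split; [exact Hp |].
      apply Rnot_le_lt. intros Hge. apply Hnone. exists p. auto.
Qed.

Lemma covered_by_union {I : Type} (d : R) (Ss : I -> R * R -> Prop) (n : nat) (idx : list I) :
  (forall i, In i idx ->
     exists squares, (length squares <= n)%nat /\ covered_by d squares (Ss i)) ->
  exists squares, (length squares <= length idx * n)%nat /\
    covered_by d squares (fun p => exists i, In i idx /\ Ss i p).
Proof.
  induction idx as [| i idx IH]; intros Hcov.
  - exists nil. split; [reflexivity |]. intros p [i [[] _]].
  - destruct (Hcov i (or_introl eq_refl)) as [sq1 [Hlen1 Hcov1]].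
    destruct IH as [sq2 [Hlen2 Hcov2]]; [intros j Hj; apply Hcov; right; exact Hj |].
    exists (sq1 ++ sq2). split; [rewrite length_app; simpl; lia |].
    intros p [j [[<- | Hj] Hp]].
    + destruct (Hcov1 p Hp) as [sq [Hsq Hin]]. exists sq. auto using in_or_app.
    + destruct (Hcov2 p (ex_intro _ j (conj Hj Hp))) as [sq [Hsq Hin]].
      exists sq. auto using in_or_app.
Qed.

Lemma matched_points_almost_monotone (phi : R -> R) (J : R -> Prop) (sigma eps d : R) :
  0 <= d -> (sigma = 1 \/ sigma = -1) ->
  (forall y y', J y -> J y' -> y < y' -> sigma * phi y < sigma * phi y') ->
  (forall y y', J y -> J y' -> Rabs (phi y - phi y') < 2 * eps -> Rabs (y - y') <= d) ->
  forall x x' y y', J y -> J y' -> phi x <= phi x' ->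
    Rabs (phi x - phi y) < eps -> Rabs (phi x' - phi y') < eps -> sigma * y <= sigma * y' + d.
Proof.
  intros Hd Hsigma Hmono Hinv x x' y y' Hy Hy' Hx Hxy Hxy'.
  apply Rnot_lt_le. intros Hfar.
  (* [y] lies beyond [y'], so [phi y > phi y'], yet both are [eps]-close to [phi x <= phi x'] *)
  assert (Hphi : phi y' < phi y).
  { destruct Hsigma as [-> | ->].
    - pose proof (Hmono y' y Hy' Hy ltac:(lra)). lra.
    - pose proof (Hmono y y' Hy Hy' ltac:(lra)). lra. }
  assert (Hclose : Rabs (phi y - phi y') < 2 * eps) by (split_Rabs; lra).
  pose proof (Hinv y y' Hy Hy' Hclose). destruct Hsigma as [-> | ->]; split_Rabs; lra.
Qed.

Lemma almost_monotone_strip_diameter (S : R * R -> Prop) (sigma d : R) :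
  (sigma = 1 \/ sigma = -1) ->
  (forall p q, S p -> S q -> fst p <= fst q -> sigma * snd p <= sigma * snd q + d) ->
  forall p q, S p -> S q ->
    Rabs ((fst p + sigma * snd p) - (fst q + sigma * snd q)) < d ->
    Rabs (fst p - fst q) <= 2 * d /\ Rabs (snd p - snd q) <= 2 * d.
Proof.
  intros Hsigma Hmono p q Hp Hq Hstrip.
  destruct (Rle_dec (fst p) (fst q));
    [pose proof (Hmono p q Hp Hq) | pose proof (Hmono q p Hq Hp)];
    destruct Hsigma as [-> | ->]; split; split_Rabs; lra.
Qed.

Definition matched (g : R -> R) (eps : R) (P Q : R * R) (p : R * R) : Prop :=
  in_piece P (fst p) /\ in_piece Q (snd p) /\ Rabs (g (fst p) - g (snd p)) < eps.

(* If [g] is monotone in the same direction on [P] and [Q], matched points go up together and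
   live in few anti-diagonal strips [x + y = const]; otherwise in few diagonal strips. *)
Lemma matched_pair_cover (g : R -> R) (eps d : R) (K : nat) (P Q : R * R) :
  monotone_piece g P -> monotone_piece g Q -> 0 < d -> 3 < INR K * d ->
  (forall y y', in_piece Q y -> in_piece Q y' -> Rabs (g y - g y') < 2 * eps ->
     Rabs (y - y') <= d) ->
  exists squares, (length squares <= 16 * K)%nat /\ covered_by d squares (matched g eps P Q).
Proof.
  intros [HP0 [HP1 [sP [HsP HincP]]]] [HQ0 [HQ1 [sQ [HsQ HincQ]]]] Hd HK Hinv.
  set (phi := fun x => sP * g x).
  set (sigma := sP * sQ).
  assert (Habs : forall u v, Rabs (phi u - phi v) = Rabs (g u - g v)).
  { intros u v. unfold phi. rewrite <- Rmult_minus_distr_l. apply sign_Rabs_mult, HsP. }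
  assert (Hsigma : sigma = 1 \/ sigma = -1)
    by (unfold sigma; destruct HsP as [-> | ->], HsQ as [-> | ->]; lra).
  assert (Hmono : forall p q, matched g eps P Q p -> matched g eps P Q q -> fst p <= fst q ->
            sigma * snd p <= sigma * snd q + d).
  { intros p q [Hpx [Hpy Hp]] [Hqx [Hqy Hq]] Hpq.
    apply (matched_points_almost_monotone phi (in_piece Q) sigma eps d)
      with (x := fst p) (x' := fst q); try rewrite Habs; auto; [lra | | |].
    - intros y y' Hy Hy' Hyy'. pose proof (HincQ y y' (proj1 Hy) Hyy' (proj2 Hy')).
      unfold phi, sigma. destruct HsP as [-> | ->]; lra.
    - intros y y' Hy Hy'. rewrite Habs. auto.
    - destruct (Rle_lt_or_eq_dec _ _ Hpq) as [Hlt | ->]; [| lra].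
      apply Rlt_le, HincP; [apply Hpx | exact Hlt | apply Hqx]. }
  apply (strips_cover _ (fun p => fst p + sigma * snd p) (-1) d K); [lra | |].
  - apply almost_monotone_strip_diameter; assumption.
  - intros p [[Hx0 Hx1] [[Hy0 Hy1] _]].
    destruct Hsigma as [-> | ->]; split; lra.
Qed.

Lemma sublevel_cover (g : R -> R) (pcs : list (R * R)) (eps d : R) :
  (forall p, In p pcs -> monotone_piece g p) ->
  (forall x, 0 <= x <= 1 -> exists p, In p pcs /\ in_piece p x) ->
  0 < d -> d <= 1 ->
  (forall y y', same_piece pcs y y' -> Rabs (g y - g y') < 2 * eps -> Rabs (y - y') <= d) ->
  exists squares, INR (length squares) <= 64 * INR (length pcs) ^ 2 / d /\
    covered_by d squares
      (fun p => 0 <= fst p <= 1 /\ 0 <= snd p <= 1 /\ Rabs (g (fst p) - g (snd p)) < eps).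
Proof.
  intros Hpcs Hcov Hd Hd1 Hinv.
  destruct (nfloor_ex (3 / d)) as [k Hk]; [apply Rlt_le, Rdiv_lt_0_compat; lra |].
  assert (HK : 3 < INR (S k) * d).
  { rewrite S_INR. apply (Rmult_lt_reg_r (/ d)); [apply Rinv_0_lt_compat, Hd |].
    rewrite Rmult_assoc, Rinv_r, Rmult_1_r by lra. unfold Rdiv in Hk. lra. }
  destruct (covered_by_union d (fun PQ => matched g eps (fst PQ) (snd PQ)) (16 * S k)
              (list_prod pcs pcs)) as [squares [Hlen Hsq]].
  { intros [P Q] HPQ. apply in_prod_iff in HPQ as [HP HQ].
    apply matched_pair_cover; auto.
    intros y y' Hy Hy'. apply Hinv. exists Q. auto. }
  exists squares. split.
  - assert (Hd_inv : 1 <= / d) by (rewrite <- Rinv_1; apply Rinv_le_contravar; lra).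
    assert (HKd : INR (S k) <= 4 / d) by (rewrite S_INR; unfold Rdiv in *; lra).
    rewrite length_prod in Hlen. apply le_INR in Hlen. rewrite !mult_INR in Hlen.
    replace (INR 16) with 16 in Hlen by (simpl; lra).
    apply Rle_trans with (1 := Hlen).
    replace (64 * INR (length pcs) ^ 2 / d)
      with (INR (length pcs) * INR (length pcs) * (16 * (4 / d))) by (field; lra).
    apply Rmult_le_compat_l; [apply Rmult_le_pos; apply pos_INR | lra].
  - intros [x y] [Hx [Hy Hxy]].
    destruct (Hcov x Hx) as [P [HP HxP]]. destruct (Hcov y Hy) as [Q [HQ HyQ]].
    apply Hsq. exists (P, Q).
    split; [apply in_prod; assumption | exact (conj HxP (conj HyQ Hxy))].
Qed.

Theorem lemma2p1 (g : R -> R) :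
  periodic1 g -> is_C1 g -> finitely_many_critical_points_01 g ->
  exists (C : R) (delta : R -> R),
    0 < C /\
    (forall eps, 0 < eps -> 0 < delta eps) /\
    (forall eta, 0 < eta -> exists eps0, 0 < eps0 /\
        forall eps, 0 < eps < eps0 -> delta eps < eta) /\
    (forall eps, 0 < eps ->
       exists squares : list (R * R),
         INR (length squares) <= C / delta eps /\
         forall x y, 0 <= x <= 1 -> 0 <= y <= 1 -> Rabs (g x - g y) < eps ->
           exists c, In c squares /\ in_square (delta eps) c (x, y)).
Proof.
  intros _ HC Hcrit.
  destruct (monotone_pieces g HC Hcrit) as [pcs [Hpcs Hcov]].
  assert (Hdiam : forall y y', same_piece pcs y y' -> Rabs (y - y') <= 1).
  { intros y y' [p [Hp [Hy Hy']]]. destruct (Hpcs p Hp) as [H0 [H1 _]].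
    unfold in_piece in *. apply Rabs_le. lra. }
  destruct (inverse_modulus g (same_piece pcs) 1 Hdiam) as [omega [Homega0 [Homega Hlim]]].
  { apply pieces_inverse_uniform; assumption. }
  assert (Hlen : 0 < INR (length pcs)).
  { destruct (Hcov 0) as [p [Hp _]]; [lra |]. destruct pcs as [| q pcs]; [destruct Hp |].
    simpl length. rewrite S_INR. pose proof (pos_INR (length pcs)). lra. }
  set (delta := fun eps => Rmin 1 (omega (2 * eps) + eps)).
  assert (Hdelta : forall eps, 0 < eps -> 0 < delta eps).
  { intros eps Heps. apply Rmin_pos; [lra |]. pose proof (Homega0 (2 * eps)). lra. }
  exists (64 * INR (length pcs) ^ 2), delta.
  split; [| split; [exact Hdelta | split]].
  - apply Rmult_lt_0_compat; [lra | apply pow_lt, Hlen].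
  - intros eta Heta. destruct (Hlim (eta / 2) ltac:(lra)) as [e [He Hsmall]].
    exists (Rmin (e / 2) (eta / 2)). split; [apply Rmin_pos; lra |].
    intros eps [Heps Hlt]. pose proof (Rmin_l (e / 2) (eta / 2)).
    pose proof (Rmin_r (e / 2) (eta / 2)). pose proof (Hsmall (2 * eps) ltac:(lra)).
    pose proof (Rmin_r 1 (omega (2 * eps) + eps)). unfold delta. lra.
  - intros eps Heps.
    destruct (sublevel_cover g pcs eps (delta eps)) as [squares [Hn Hsq]];
      [assumption | assumption | exact (Hdelta eps Heps) | apply Rmin_l | |].
    + intros y y' Hy Hsmall. apply Rmin_glb; [exact (Hdiam y y' Hy) |].
      pose proof (Homega (2 * eps) y y' Hy Hsmall). lra.
    + exists squares. split; [exact Hn |].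
      intros x y Hx Hy Hxy. exact (Hsq (x, y) (conj Hx (conj Hy Hxy))).
Qed.
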